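(* For every $n\ge 4$, $w^4(P_n)\ge \lceil n/4\rceil$, where $P_n$ is the path on $n$ vertices.
   Context: All graphs are finite, simple and undirected. For a graph $G$, a permutation $\sigma$ of $V(G)$ is a 2-placement of $G$ if for every edge $ab\in E(G)$, $\sigma(a)\sigma(b)\notin E(G)$. $G^k$ denotes the $k$-th power of $G$ (same vertex set, distinct vertices adjacent iff their distance in $G$ is at most $k$); $\sigma(G)\subseteq G^k$ means that for every edge $ab$ of $G$, $dist_G(\sigma(a),\sigma(b))\le k$. A (surjective) mapping $f:V(G)\to\{1,\dots,p\}$ is a $p$-labeled-packing of $G$ into $G^k$ if there exists a permutation $\sigma$ of $V(G)$ such that $\sigma$ is a 2-placement of $G$, $\sigma(G)\subseteq G^k$, and $f(\sigma(v))=f(v)$ for every vertex $v$. The labeled packing $k$-power number $w^k(G)$ is the maximum $p$ for which $G$ admits a $p$-labeled-packing into $G^k$. *)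

From mathcomp Require Import all_boot all_fingroup.
Set Implicit Arguments. Unset Strict Implicit. Unset Printing Implicit Defensive.

Definition simple_graph (T : finType) (e : rel T) : Prop :=
  symmetric e /\ irreflexive e.

Definition dist_le (T : finType) (e : rel T) (k : nat) (x y : T) : Prop :=
  exists s : seq T, [/\ size s <= k, path e x s & last x s = y].

Definition two_placement (T : finType) (e : rel T) (sigma : {perm T}) : Prop :=
  forall a b, e a b -> ~~ e (sigma a) (sigma b).

Definition image_in_power (T : finType) (e : rel T) (k : nat) (sigma : {perm T}) : Prop :=
  forall a b, e a b -> dist_le e k (sigma a) (sigma b).

Definition labeled_packing (T : finType) (e : rel T) (k p : nat) (f : T -> nat) : Prop :=
  [/\ (forall v, 1 <= f v <= p),
      (forall i, 1 <= i <= p -> exists v, f v = i) &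
      exists sigma : {perm T},
        [/\ two_placement e sigma, image_in_power e k sigma &
            forall v, f (sigma v) = f v]].

Definition admits_labeled_packing (T : finType) (e : rel T) (k p : nat) : Prop :=
  exists f : T -> nat, labeled_packing e k p f.

(* w^k(G) >= m  (w^k(G) is the maximum p admitting a packing) *)
Definition wk_ge (T : finType) (e : rel T) (k m : nat) : Prop :=
  exists2 p, m <= p & admits_labeled_packing e k p.

Definition path_graph (n : nat) : rel 'I_n :=
  fun i j => (i.+1 == j :> nat) || (j.+1 == i :> nat).
Arguments path_graph n : clear implicits.

From mathcomp Require Import all_boot all_fingroup zify.

(* Number the vertices of P_n as 0, ..., n-1.  A permutation
   sigma of V(P_n) under which consecutive vertices are sent to vertices at
   distance between 2 and k ("k-far" images) is automatically a 2-placement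
   (images of an edge are never adjacent) and maps P_n into P_n^k (images of
   an edge are within distance k).  If moreover a labelling f with values
   exactly {1, ..., p} is sigma-invariant, it is a p-labeled-packing into
   P_n^k.

   The construction for k = 4: cut 0..n-1 into n/4 - 1 blocks of four
   vertices followed by a last block of r = 4 + n mod 4 vertices (4 <= r <= 7).
   Each block of four is permuted by 0 1 2 3 |-> 1 3 0 2; the last block by an
   explicit table [tail_perm r] fixing its first vertex.  Every block gets its
   own label, except that when r > 4 the (fixed) first vertex of the last
   block is given a separate label; this yields ceil(n/4) labels. *)

Lemma path_graph_walk n d (x y : 'I_n) :
  y = x + d :> nat \/ x = y + d :> nat -> dist_le (path_graph n) d x y.
Proof.
elim: d x => [|d IH] x hxy.
  by exists [::]; split => //=; apply: val_inj; case: hxy; rewrite addn0.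
have [x' edge_xx' hx'y] : exists2 x' : 'I_n, path_graph n x x' &
    (y = x' + d :> nat \/ x' = y + d :> nat).
  case: hxy => hxy.
  - have lt_x1 : x.+1 < n by have := ltn_ord y; lia.
    exists (Ordinal lt_x1); last by left => /=; lia.
    by apply/orP; left => /=.
  - have lt_x1 : x.-1 < n by have := ltn_ord x; lia.
    exists (Ordinal lt_x1); last by right => /=; lia.
    by apply/orP; right; apply/eqP => /=; lia.
have [s [size_s path_s last_s]] := IH x' hx'y.
by exists (x' :: s); split => //=; rewrite edge_xx'.
Qed.

Lemma path_graph_dist_le n k (x y : 'I_n) :
  x <= y + k -> y <= x + k -> dist_le (path_graph n) k x y.
Proof.
move=> hxy hyx.
have [s [size_s path_s last_s]] :
    dist_le (path_graph n) (maxn (y - x) (x - y)) x y.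
  by apply: path_graph_walk; case: (leqP x y) => cmp; [left | right]; lia.
by exists s; split => //; lia.
Qed.

Definition far (k a b : nat) : Prop :=
  [/\ a + 2 <= b \/ b + 2 <= a, a <= b + k & b <= a + k].

Lemma far_sym k a b : far k a b -> far k b a.
Proof. by case=> [[]] *; split => //; [right | left]. Qed.

Lemma perm_of_nat n (g g' : nat -> nat) :
  (forall i, i < n -> g i < n) -> (forall i, i < n -> g' (g i) = i) ->
  exists s : {perm 'I_n}, forall i : 'I_n, val (s i) = g i.
Proof.
move=> g_lt g_inv.
pose gn (i : 'I_n) : 'I_n := Ordinal (g_lt i (ltn_ord i)).
have gn_inj : injective gn.
  by move=> i j /(congr1 (g' \o val)) /=; rewrite !g_inv //; apply: val_inj.
by exists (perm gn_inj) => i; rewrite permE.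
Qed.

Lemma packing_of_far_perm n k p (g g' f : nat -> nat) :
  (forall i, i < n -> g i < n) ->
  (forall i, i < n -> g' (g i) = i) ->
  (forall i, i.+1 < n -> far k (g i) (g i.+1)) ->
  (forall i, i < n -> f (g i) = f i) ->
  (forall i, i < n -> 1 <= f i <= p) ->
  (forall l, 1 <= l <= p -> exists2 i, i < n & f i = l) ->
  admits_labeled_packing (path_graph n) k p.
Proof.
move=> g_lt g_inv g_far f_inv f_range f_onto.
have [s val_s] := @perm_of_nat n g g' g_lt g_inv.
have edge_far (a b : 'I_n) : path_graph n a b -> far k (g a) (g b).
  case/orP => /eqP ab; rewrite -ab.
  - by apply: g_far; rewrite ab.
  - by apply: far_sym; apply: g_far; rewrite ab.
exists (fun v : 'I_n => f v); split.
- by move=> v; apply: f_range.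
- by move=> l /f_onto [i lt_in fi]; exists (Ordinal lt_in).
exists s; split.
- move=> a b /edge_far [sep _ _]; rewrite /path_graph !val_s.
  by apply/negP => /orP [] /eqP; lia.
- move=> a b /edge_far [_ h1 h2].
  by apply: path_graph_dist_le; rewrite !val_s.
- by move=> v; rewrite val_s f_inv.
Qed.

Definition quad (j : nat) : nat :=
  match j with 0 => 1 | 1 => 3 | 2 => 0 | _ => 2 end.
Definition quad_inv (j : nat) : nat :=
  match j with 0 => 2 | 1 => 0 | 2 => 3 | _ => 1 end.

Definition tail_perm (r j : nat) : nat :=
  match r with
  | 4 => quad j
  | 5 => match j with 0 => 0 | 1 => 2 | 2 => 4 | 3 => 1 | _ => 3 end
  | 6 => match j with 0 => 0 | 1 => 2 | 2 => 4 | 3 => 1 | 4 => 3 | _ => 5 end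
  | _ => match j with 0 => 0 | 1 => 2 | 2 => 4 | 3 => 1 | 4 => 5 | 5 => 3
                    | _ => 6 end
  end.
Definition tail_perm_inv (r j : nat) : nat :=
  match r with
  | 4 => quad_inv j
  | 5 => match j with 0 => 0 | 1 => 3 | 2 => 1 | 3 => 4 | _ => 2 end
  | 6 => match j with 0 => 0 | 1 => 3 | 2 => 1 | 3 => 4 | 4 => 2 | _ => 5 end
  | _ => match j with 0 => 0 | 1 => 3 | 2 => 1 | 3 => 5 | 4 => 2 | 5 => 4
                    | _ => 6 end
  end.

Definition prefix_len (n : nat) : nat := 4 * (n %/ 4 - 1).

Definition sigma (n i : nat) : nat :=
  if i < prefix_len n then 4 * (i %/ 4) + quad (i %% 4)
  else prefix_len n + tail_perm (n - prefix_len n) (i - prefix_len n).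
Definition sigma_inv (n i : nat) : nat :=
  if i < prefix_len n then 4 * (i %/ 4) + quad_inv (i %% 4)
  else prefix_len n + tail_perm_inv (n - prefix_len n) (i - prefix_len n).

Definition label (n i : nat) : nat :=
  if i < prefix_len n then i %/ 4 + 1
  else n %/ 4 + (if (0 < i - prefix_len n) && (4 < n - prefix_len n)
                 then 1 else 0).

Ltac no_match x := lazymatch x with
  | context [match _ with _ => _ end] => fail
  | _ => idtac end.
Ltac block_cases :=
  cbv [prefix_len sigma sigma_inv label quad quad_inv tail_perm tail_perm_inv] in *;
  repeat match goal with
  | |- context [match ?x with _ => _ end] =>
      no_match x; let E := fresh "E" in
      destruct x eqn:E; try (exfalso; lia)
  end; lia.

Section Construction.
Variable n : nat.
Hypothesis n_ge4 : 4 <= n.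

Lemma sigma_lt i : i < n -> sigma n i < n.
Proof. by move=> lt_in; block_cases. Qed.

Lemma sigmaK i : i < n -> sigma_inv n (sigma n i) = i.
Proof. by move=> lt_in; block_cases. Qed.

Lemma sigma_far i : i.+1 < n -> far 4 (sigma n i) (sigma n i.+1).
Proof. by move=> lt_in; split; block_cases. Qed.

Lemma label_sigma i : i < n -> label n (sigma n i) = label n i.
Proof. by move=> lt_in; block_cases. Qed.

Lemma label_range i : i < n -> 1 <= label n i <= (n + 3) %/ 4.
Proof. by move=> lt_in; block_cases. Qed.

Lemma label_onto l :
  1 <= l <= (n + 3) %/ 4 -> exists2 i, i < n & label n i = l.
Proof.
move=> hl; exists (if l < n %/ 4 then 4 * (l - 1)
                   else if l == n %/ 4 then prefix_len n else prefix_len n + 1);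
  block_cases.
Qed.

End Construction.

Theorem corollary1p2 (n : nat) : 4 <= n ->
  wk_ge (path_graph n) 4 ((n + 3) %/ 4).
Proof.
move=> n_ge4; exists ((n + 3) %/ 4) => //.
apply: (@packing_of_far_perm n 4 _ (sigma n) (sigma_inv n) (label n)).
- exact: sigma_lt.
- exact: sigmaK.
- exact: sigma_far.
- exact: label_sigma.
- exact: label_range.
- exact: label_onto.
Qed.
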